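(* Let $f_1 \in \mathcal{F}_{\mu_1,L_1}(\mathbb{R}^d)$ and $f_2 \in \mathcal{F}_{\mu_2,L_2}(\mathbb{R}^d)$ with $\mu_1\in[0,\infty)$, $\mu_2\in\mathbb{R}$, such that $F=f_1-f_2$ is bounded below with $F_{lo}:=\inf F$, $\emptyset\ne\operatorname{dom}\partial f_1\subseteq\operatorname{dom}\partial f_2$ and $\operatorname{range}\partial f_2\subseteq\operatorname{range}\partial f_1$. Assume exactly one of $f_1,f_2$ is smooth (exactly one of $L_1, L_2$ is $\infty$), and $\mu_1+\mu_2>0$ or $\mu_1=\mu_2=0$. Run $N\ge1$ DCA iterations from $x^0$: for $k=0,\dots,N-1$ select $g_2^k\in\partial f_2(x^k)$, $x^{k+1}\in\operatorname{argmin}_w\{f_1(w)-\langle g_2^k,w\rangle\}$, $g_1^{k+1}:=g_2^k\in\partial f_1(x^{k+1})$; $g_1^0\in\partial f_1(x^0)$, $g_2^N\in\partial f_2(x^N)$ arbitrary. If the parameters lie in one of the domains below, with $p := \sigma+\sigma^+$, then $$\tfrac12\min_{0\le k\le N}\|g_1^k-g_2^k\|^2\le\frac{F(x^0)-F(x^N)}{pN},$$ and if moreover $L_1>\mu_2$, $\tfrac12\min_{0\le k\le N}\|g_1^k-g_2^k\|^2\le\frac{F(x^0)-F_{lo}}{pN+\frac{1}{L_1-\mu_2}}$. Domains and values: (a) $L_1=\infty>L_2\ge\mu_1\ge0$ and $\mu_2(\mu_1^{-1}+\mu_2^{-1}+L_2^{-1})\ge0$: $\sigma=0$, $\sigma^+=\frac{L_2+\mu_1}{L_2^2}$.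 (b) $L_2=\infty>L_1\ge\mu_2\ge0$ and $\mu_1(\mu_1^{-1}+\mu_2^{-1}+L_1^{-1})\ge0$: $\sigma=\frac{L_1+\mu_2}{L_1^2}$, $\sigma^+=0$. (c) $L_2=\infty$ and $\mu_1>-\mu_2>0$: $\sigma=\frac{L_1^{-1}(\mu_1^{-1}+\mu_2^{-1})}{\mu_1^{-1}+\mu_2^{-1}-L_1^{-1}}$, $\sigma^+=0$. (d) $L_1=\infty$, $\mu_1>-\mu_2>0$ and $\mu_1^{-1}+\mu_2^{-1}+L_2^{-1}>0$: $\sigma=0$, $\sigma^+=\frac{\mu_1+\mu_2}{\mu_2^2}$.
   Context: For $\mu\in\mathbb{R}$ and $L\in(\mu,\infty]$, $\mathcal{F}_{\mu,L}(\mathbb{R}^d)$ is the class of proper lower semicontinuous $f:\mathbb{R}^d\to\mathbb{R}$ with $f-\frac{\mu}{2}\|\cdot\|^2$ convex and, if $L<\infty$, $\frac{L}{2}\|\cdot\|^2-f$ convex ($L$ may be nonpositive; $L=\infty$ means no upper curvature condition, i.e. possibly nonsmooth). Subdifferential: $\partial f(x)=\{g+\mu x: g\in\partial(f-\frac{\mu}{2}\|\cdot\|^2)(x)\}$, equal to $\{\nabla f(x)\}$ where differentiable. $\operatorname{dom}\partial f=\{x:\partial f(x)\neq\emptyset\}$, $\operatorname{range}\partial f=\bigcup_x\partial f(x)$. Convention: $1/\infty=0$. *)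

From HB Require Import structures.
From mathcomp Require Import all_boot all_order all_algebra.
From mathcomp Require Import all_classical all_reals all_analysis.
Set Implicit Arguments. Unset Strict Implicit. Unset Printing Implicit Defensive.
Import Order.TTheory GRing.Theory Num.Theory.
Import numFieldNormedType.Exports.
Local Open Scope classical_set_scope.
Local Open Scope ring_scope.

Section DefsSec.
Variables (R : realType) (d : nat).

Definition dotv (u v : 'rV[R]_d) : R := \sum_(i < d) u ord0 i * v ord0 i.
Definition sqnorm (v : 'rV[R]_d) : R := dotv v v.

Definition convex_fun (g : 'rV[R]_d -> R) : Prop :=
  forall (x y : 'rV[R]_d) (t : R), 0 <= t -> t <= 1 ->
    g (t *: x + (1 - t) *: y) <= t * g x + (1 - t) * g y.

(* f in F_{mu,L}(R^d); L : \bar R with L = +oo meaning L = infinity.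
   f is real-valued everywhere, hence proper. *)
Definition FmuL (mu : R) (L : \bar R) (f : 'rV[R]_d -> R) : Prop :=
  lower_semicontinuous (fun x => (f x)%:E) /\
  (mu%:E < L)%E /\
  convex_fun (fun x => f x - mu / 2 * sqnorm x) /\
  (forall r : R, L = r%:E -> convex_fun (fun x => r / 2 * sqnorm x - f x)).

Definition subdiff_cvx (g : 'rV[R]_d -> R) (x : 'rV[R]_d) : set 'rV[R]_d :=
  [set s | forall y, g x + dotv s (y - x) <= g y].

Definition subdiff (mu : R) (f : 'rV[R]_d -> R) (x : 'rV[R]_d) : set 'rV[R]_d :=
  [set s + mu *: x | s in subdiff_cvx (fun y => f y - mu / 2 * sqnorm y) x].

Definition dom_subdiff mu f : set 'rV[R]_d := [set x | subdiff mu f x !=set0].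
Definition range_subdiff mu f : set 'rV[R]_d := \bigcup_(x in [set: 'rV[R]_d]) subdiff mu f x.

Definition is_argmin (h : 'rV[R]_d -> R) (w : 'rV[R]_d) : Prop :=
  forall y, h w <= h y.

End DefsSec.

(* Extended inverse 1/x on \bar R with conventions 1/oo = 0 and 1/0 = +oo
   (the latter as limit from above: the classes F_{mu,L} grow with L and
   shrink with mu). *)
Definition einv {R : realType} (x : \bar R) : \bar R :=
  match x with
  | r%:E => if r == 0 then +oo%E else (r^-1)%:E
  | _ => 0%E
  end.

(* real inverse with 1/oo = 0 (used only where the argument is nonzero) *)
Definition rinv {R : realType} (x : \bar R) : R :=
  match x with
  | r%:E => r^-1
  | _ => 0
  end.

From HB Require Import structures.
From mathcomp Require Import all_boot all_order all_algebra.
From mathcomp Require Import all_classical all_reals all_analysis.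
From mathcomp Require Import ring lra.
Import Order.TTheory GRing.Theory Num.Theory.
Import numFieldNormedType.Exports.
Local Open Scope classical_set_scope.
Local Open Scope ring_scope.

(* Every DCA step is a sufficient-decrease step. Let f be the smooth one of f1, f2, with
   curvature in [mu, L], let a, b be its subgradients at the endpoints of the step and
   u = x^k - x^(k+1), z = a - b - mu u. The interpolation inequality of F_{mu,L}, together
   with the subgradient inequality of the other function, gives
     (mu1 + mu2) |u|^2 + |z|^2 / (L - mu) <= 2 (F x^k - F x^(k+1))  and
     |z|^2 / (L - mu) <= <z, u>,
   while the residual g1 - g2 at step k (f1 smooth) or k + 1 (f2 smooth) is z + mu u.
   For the given sigma, sigma^+ the first inequality plus a suitable nonnegative multiple of
   the second dominates p |z + mu u|^2, because the difference is a positive semidefinite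
   quadratic form in (u, z); summing over the steps gives the first bound. For the second,
   a gradient step of length 1/(L1 - mu2) from x^N lowers F by |g1^N - g2^N|^2 / (2 (L1 - mu2)),
   which bounds F(x^N) - F_lo from below. *)

Set Implicit Arguments. Unset Strict Implicit.

Section InnerProduct.
Variables (R : realType) (d : nat).
Notation V := 'rV[R]_d.
Implicit Types (u v w : V) (a : R).

Lemma dotvC u v : dotv u v = dotv v u.
Proof. by apply: eq_bigr => i _; rewrite mulrC. Qed.

Lemma dotvDl u v w : dotv (u + v) w = dotv u w + dotv v w.
Proof. by rewrite /dotv -big_split; apply: eq_bigr => i _; rewrite mxE mulrDl. Qed.

Lemma dotvZl a u w : dotv (a *: u) w = a * dotv u w.
Proof. by rewrite /dotv mulr_sumr; apply: eq_bigr => i _; rewrite mxE mulrA. Qed.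

Lemma dotvNl u w : dotv (- u) w = - dotv u w.
Proof. by rewrite -scaleN1r dotvZl mulN1r. Qed.

Lemma dotvBl u v w : dotv (u - v) w = dotv u w - dotv v w.
Proof. by rewrite dotvDl dotvNl. Qed.

Lemma dotvDr u v w : dotv w (u + v) = dotv w u + dotv w v.
Proof. by rewrite dotvC dotvDl !(dotvC w). Qed.

Lemma dotvZr a u w : dotv w (a *: u) = a * dotv w u.
Proof. by rewrite dotvC dotvZl dotvC. Qed.

Lemma dotvNr u w : dotv w (- u) = - dotv w u.
Proof. by rewrite dotvC dotvNl dotvC. Qed.

Lemma dotvBr u v w : dotv w (u - v) = dotv w u - dotv w v.
Proof. by rewrite dotvDr dotvNr. Qed.

Definition dotvE := (dotvDl, dotvDr, dotvBl, dotvBr, dotvZl, dotvZr, dotvNl, dotvNr).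

Lemma sqnorm_ge0 u : 0 <= sqnorm u.
Proof. by apply: sumr_ge0 => i _; rewrite -expr2 sqr_ge0. Qed.

Lemma sqnormN u : sqnorm (- u) = sqnorm u.
Proof. by rewrite /sqnorm dotvNl dotvNr opprK. Qed.

Lemma sqnormZ a u : sqnorm (a *: u) = a ^+ 2 * sqnorm u.
Proof. by rewrite /sqnorm dotvZl dotvZr mulrA expr2. Qed.

Lemma sqnormD u v : sqnorm (u + v) = sqnorm u + 2 * dotv u v + sqnorm v.
Proof. by rewrite /sqnorm !dotvE (dotvC v u); ring. Qed.

Definition psd2 (a c b : R) : Prop := [/\ 0 <= a, 0 <= b & c ^+ 2 <= a * b].

Lemma quad_form_ge0 (a c b : R) u v : psd2 a c b ->
  0 <= a * sqnorm u + 2 * c * dotv u v + b * sqnorm v.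
Proof.
case=> a_ge0 b_ge0 cab.
have [a0|a_neq0] := eqVneq a 0.
  subst a; rewrite mul0r in cab.
  have -> : c = 0 by apply/eqP; rewrite -sqrf_eq0 eq_le sqr_ge0 andbT.
  by rewrite !(mul0r, mulr0) !add0r mulr_ge0 ?sqnorm_ge0.
have a_gt0 : 0 < a by rewrite lt_def a_neq0.
rewrite -(pmulr_rge0 _ a_gt0).
have -> : a * (a * sqnorm u + 2 * c * dotv u v + b * sqnorm v) =
    sqnorm (a *: u + c *: v) + (a * b - c ^+ 2) * sqnorm v.
  by rewrite sqnormD !sqnormZ dotvZl dotvZr; ring.
by rewrite addr_ge0 ?sqnorm_ge0 // mulr_ge0 ?subr_ge0 ?sqnorm_ge0.
Qed.

End InnerProduct.

Lemma ler_of_le_add_vanishing (R : realFieldType) (A B C : R) :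
  (forall t, 0 < t -> t <= 1 -> A <= B + t * C) -> A <= B.
Proof.
move=> H.
have [C_le0|C_gt0] := leP C 0.
  by apply: le_trans (H 1 ltr01 (lexx _)) _; lra.
apply/ler_addgt0Pr => e e_gt0.
have eC_gt0 : 0 < e + C by lra.
have t_gt0 : 0 < e / (e + C) by apply: divr_gt0.
have t_le1 : e / (e + C) <= 1 by rewrite ler_pdivrMr // mul1r; lra.
apply: le_trans (H _ t_gt0 t_le1) _; rewrite lerD2l mulrAC ler_pdivrMr //; nra.
Qed.

Section Subdifferential.
Variables (R : realType) (d : nat).
Notation V := 'rV[R]_d.
Implicit Types (f : V -> R) (x y z g : V) (mu l : R).

Lemma subdiff_quad_minorant mu f y g : subdiff mu f y g ->
  forall z, f y + dotv g (z - y) + mu / 2 * sqnorm (z - y) <= f z.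
Proof.
move=> [s s_sub <-] z; have /= := s_sub z.
rewrite /sqnorm !dotvE (dotvC z y) => ?; lra.
Qed.

Lemma subdiff_quad_majorant mu l f y g : FmuL mu l%:E f -> subdiff mu f y g ->
  forall z, f z <= f y + dotv g (z - y) + l / 2 * sqnorm (z - y).
Proof.
move=> [_ [_ [_ /(_ l erefl) concave]]] g_sub z.
apply: (@ler_of_le_add_vanishing _ _ _ ((l - mu) / 2 * sqnorm (z - y))) => t t_gt0 t_le1.
(* y is a convex combination of z and of the point y - t (z - y) beyond y *)
pose w := y - t *: (z - y); pose tau := t / (1 + t).
have t1_gt0 : 0 < 1 + t by lra.
have tau_ge0 : 0 <= tau by rewrite divr_ge0 // ltW.
have tau_le1 : tau <= 1 by rewrite ler_pdivrMr // mul1r; lra.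
have y_comb : tau *: z + (1 - tau) *: w = y.
  by apply/rowP => i; rewrite !mxE /tau; field; rewrite gt_eqF.
have := concave z w tau tau_ge0 tau_le1; rewrite y_comb /= => hc.
have hlb := subdiff_quad_minorant g_sub w.
set A := l / 2 * sqnorm z - f z in hc.
set B := l / 2 * sqnorm w - f w in hc.
have hc' : (1 + t) * (l / 2 * sqnorm y - f y) <= t * A + B.
  have -> : t * A + B = (1 + t) * (tau * A + (1 - tau) * B).
    by rewrite /tau; field; rewrite gt_eqF.
  by rewrite ler_pM2l.
rewrite -(ler_pM2l t_gt0).
move: hc' hlb; rewrite /A /B /w /sqnorm !dotvE (dotvC z y) => ? ?; lra.
Qed.

Lemma is_argmin_subdiff mu (L : \bar R) f b y : FmuL mu L f ->
  is_argmin (fun w => f w - dotv b w) y -> subdiff mu f y b.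
Proof.
move=> [_ [_ [convex _]]] y_min.
exists (b - mu *: y); last by rewrite subrK.
move=> z /=.
apply: (@ler_of_le_add_vanishing _ _ _ (mu / 2 * sqnorm (z - y))) => t t_gt0 t_le1.
rewrite -(ler_pM2l t_gt0).
have := convex z y t (ltW t_gt0) t_le1.
have := y_min (t *: z + (1 - t) *: y).
rewrite /sqnorm /= !dotvE ?(dotvC z y) ?(dotvC z b) ?(dotvC y b).
move=> ? ?; lra.
Qed.

Lemma subdiff_interpolation mu l f xi xj gi gj : FmuL mu l%:E f ->
  subdiff mu f xi gi -> subdiff mu f xj gj ->
  f xj + dotv gj (xi - xj) + mu / 2 * sqnorm (xi - xj) +
  sqnorm (gi - gj - mu *: (xi - xj)) / (2 * (l - mu)) <= f xi.
Proof.
move=> fF gi_sub gj_sub.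
have lmu_gt0 : 0 < l - mu by case: fF => _ [+ _]; rewrite lte_fin subr_gt0.
have key k : f xj + dotv gj (xi - xj) + mu / 2 * sqnorm (xi - xj) +
    (k - (l - mu) * k ^+ 2 / 2) * sqnorm (gi - gj - mu *: (xi - xj)) <= f xi.
  pose w := xi - k *: (gi - gj - mu *: (xi - xj)).
  have := subdiff_quad_minorant gj_sub w.
  have := subdiff_quad_majorant fF gi_sub w.
  rewrite /w /sqnorm !dotvE (dotvC xj xi) (dotvC gi xi) (dotvC gj xi) (dotvC gi xj).
  rewrite (dotvC gj xj) (dotvC gj gi) => ? ?; lra.
have := key (l - mu)^-1.
have -> : (l - mu)^-1 - (l - mu) * (l - mu)^-1 ^+ 2 / 2 = (2 * (l - mu))^-1.
  by field; rewrite gt_eqF.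
by rewrite (mulrC _^-1).
Qed.

End Subdifferential.

Section Certificates.
Variable R : realType.

Definition rate_certificate (s m mo M lam : R) : Prop :=
  0 <= lam /\ psd2 (m + mo - s * m ^+ 2) (s * m + lam) ((1 + 2 * lam) / M - s).

Lemma residual_le_of_descent d (s m mo M lam D : R) (u z : 'rV[R]_d) :
  rate_certificate s m mo M lam ->
  (m + mo) * sqnorm u + sqnorm z / M <= 2 * D -> sqnorm z / M <= dotv z u ->
  s * sqnorm (z + m *: u) <= 2 * D.
Proof.
move=> [lam_ge0 [a_ge0 b_ge0 cab]] descent cocoercive.
have psd : psd2 (m + mo - s * m ^+ 2) (- (s * m + lam)) ((1 + 2 * lam) / M - s).
  by split; rewrite ?sqrrN.
have := quad_form_ge0 u z psd.
have : 0 <= lam * (dotv z u - sqnorm z / M) by rewrite mulr_ge0 // subr_ge0.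
rewrite sqnormD sqnormZ dotvZr (dotvC u z) => ? ?; lra.
Qed.

Lemma certificate_convex_partner (m mo L : R) :
  0 < L -> m < L -> 0 <= mo -> 0 <= L * m + L * mo + m * mo ->
  rate_certificate ((L + mo) / L ^+ 2) m mo (L - m) (mo / L).
Proof.
move=> L_gt0 mL mo_ge0 e2_ge0.
have L_neq0 : L != 0 by rewrite gt_eqF.
have M_gt0 : 0 < L - m by rewrite subr_gt0.
have M_neq0 : L - m != 0 by rewrite gt_eqF.
set e2 := L * m + L * mo + m * mo in e2_ge0.
rewrite /rate_certificate.
have -> : m + mo - (L + mo) / L ^+ 2 * m ^+ 2 = (L - m) * e2 / L ^+ 2 by rewrite /e2; field.
have -> : (1 + 2 * (mo / L)) / (L - m) - (L + mo) / L ^+ 2 = e2 / (L ^+ 2 * (L - m)).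
  by rewrite /e2; field; rewrite L_neq0 M_neq0.
have -> : (L + mo) / L ^+ 2 * m + mo / L = e2 / L ^+ 2 by rewrite /e2; field.
split; first by rewrite divr_ge0 // ltW.
split.
- by rewrite divr_ge0 ?sqr_ge0 // mulr_ge0 // ltW.
- by rewrite divr_ge0 // mulr_ge0 ?sqr_ge0 // ltW.
- by rewrite le_eqVlt; apply/predU1P; left; field; rewrite L_neq0 M_neq0.
Qed.

Lemma certificate_weakly_convex_partner (m mo L : R) :
  0 < m + mo -> mo < 0 -> m < L ->
  rate_certificate ((m + mo) / ((m + mo) * L - m * mo)) m mo (L - m) 0.
Proof.
move=> sum_gt0 mo_lt0 mL.
have M_gt0 : 0 < L - m by rewrite subr_gt0.
have M_neq0 : L - m != 0 by rewrite gt_eqF.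
set K := (m + mo) * L - m * mo.
have K_gt0 : 0 < K by rewrite /K; nra.
have K_neq0 : K != 0 by rewrite gt_eqF.
rewrite /rate_certificate.
have -> : m + mo - (m + mo) / K * m ^+ 2 = (m + mo) ^+ 2 * (L - m) / K by rewrite /K; field.
have -> : (1 + 2 * 0) / (L - m) - (m + mo) / K = m ^+ 2 / (K * (L - m)).
  by rewrite /K; field; rewrite K_neq0 M_neq0.
split=> //; split.
- by rewrite divr_ge0 ?mulr_ge0 ?sqr_ge0 // ltW.
- by rewrite divr_ge0 ?sqr_ge0 // mulr_ge0 // ltW.
- by rewrite le_eqVlt; apply/predU1P; left; field; rewrite K_neq0 M_neq0.
Qed.

Lemma certificate_weakly_convex_smooth (m mo L : R) :
  0 < m + mo -> m < 0 -> m < L -> L * m + L * mo + m * mo <= 0 ->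
  rate_certificate ((m + mo) / m ^+ 2) m mo (L - m) (- ((m + mo) / m)).
Proof.
move=> sum_gt0 m_lt0 mL e2_le0.
have M_gt0 : 0 < L - m by rewrite subr_gt0.
have m_neq0 : m != 0 by rewrite lt_eqF.
rewrite /rate_certificate.
have -> : m + mo - (m + mo) / m ^+ 2 * m ^+ 2 = 0 by field.
have -> : (m + mo) / m ^+ 2 * m + - ((m + mo) / m) = 0 by field.
have -> : (1 + 2 * - ((m + mo) / m)) / (L - m) - (m + mo) / m ^+ 2 =
    - (L * m + L * mo + m * mo) / (m ^+ 2 * (L - m)).
  by field; rewrite m_neq0 gt_eqF.
split; first by rewrite oppr_ge0 mulr_ge0_le0 ?invr_le0 ?ltW //; lra.
split; rewrite ?expr0n ?mul0r //.
by rewrite divr_ge0 ?oppr_ge0 // mulr_ge0 ?sqr_ge0 // ltW.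
Qed.

End Certificates.

Section DCAStep.
Variables (R : realType) (d : nat) (mu1 mu2 : R) (f1 f2 : 'rV[R]_d -> R).
Notation F y := (f1 y - f2 y).

Lemma dca_step_ineqs_smooth_f1 l1 x0 x1 a b : FmuL mu1 l1%:E f1 ->
  subdiff mu1 f1 x0 a -> subdiff mu1 f1 x1 b -> subdiff mu2 f2 x0 b ->
  let u := x0 - x1 in let z := a - b - mu1 *: u in
  (mu1 + mu2) * sqnorm u + sqnorm z / (l1 - mu1) <= 2 * (F x0 - F x1) /\
  sqnorm z / (l1 - mu1) <= dotv z u.
Proof.
move=> f1F a_sub b_sub b_sub2 u z.
have M_gt0 : 0 < l1 - mu1 by case: f1F => _ [+ _]; rewrite lte_fin subr_gt0.
have q1 := subdiff_interpolation f1F a_sub b_sub.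
have q2 := subdiff_interpolation f1F b_sub a_sub.
have q3 := subdiff_quad_minorant b_sub2 x1.
have -> : dotv z u = dotv a u - dotv b u - mu1 * sqnorm u by rewrite !dotvBl dotvZl.
have zN : b - a - mu1 *: (x1 - x0) = - z.
  by rewrite /z /u; apply/rowP => i; rewrite !mxE; ring.
have uN : x1 - x0 = - u by rewrite opprB.
rewrite -/u -/z in q1; rewrite zN uN !sqnormN dotvNr in q2; rewrite uN sqnormN dotvNr in q3.
rewrite invfM mulrA mulrAC in q1 q2.
split; lra.
Qed.

Lemma dca_step_ineqs_smooth_f2 l2 x0 x1 b c : FmuL mu2 l2%:E f2 ->
  subdiff mu1 f1 x1 b -> subdiff mu2 f2 x0 b -> subdiff mu2 f2 x1 c ->
  let u := x0 - x1 in let z := b - c - mu2 *: u in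
  (mu1 + mu2) * sqnorm u + sqnorm z / (l2 - mu2) <= 2 * (F x0 - F x1) /\
  sqnorm z / (l2 - mu2) <= dotv z u.
Proof.
move=> f2F b_sub b_sub2 c_sub u z.
have q1 := subdiff_quad_minorant b_sub x0.
have q2 := subdiff_interpolation f2F c_sub b_sub2.
have q3 := subdiff_interpolation f2F b_sub2 c_sub.
have -> : dotv z u = dotv b u - dotv c u - mu2 * sqnorm u by rewrite !dotvBl dotvZl.
have zN : c - b - mu2 *: (x1 - x0) = - z.
  by rewrite /z /u; apply/rowP => i; rewrite !mxE; ring.
have uN : x1 - x0 = - u by rewrite opprB.
rewrite -/u in q1; rewrite -/u -/z in q3; rewrite zN uN !sqnormN dotvNr in q2.
rewrite invfM mulrA mulrAC in q2 q3.
split; lra.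
Qed.

Lemma gradient_step_descent l1 x a b : FmuL mu1 l1%:E f1 ->
  subdiff mu1 f1 x a -> subdiff mu2 f2 x b -> mu2 < l1 ->
  F (x - (l1 - mu2)^-1 *: (a - b)) <= F x - sqnorm (a - b) / (2 * (l1 - mu2)).
Proof.
move=> f1F a_sub b_sub mu2_lt_l1.
set k := (l1 - mu2)^-1; set w := x - k *: (a - b).
have := subdiff_quad_majorant f1F a_sub w.
have := subdiff_quad_minorant b_sub w.
have -> : w - x = - (k *: (a - b)) by rewrite /w addrAC subrr add0r.
rewrite sqnormN sqnormZ !dotvNr !dotvZr.
have -> : k * dotv b (a - b) = k * dotv a (a - b) - k * sqnorm (a - b).
  by rewrite /sqnorm dotvBl; ring.
have lmu_neq0 : l1 - mu2 != 0 by rewrite gt_eqF ?subr_gt0.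
have -> : sqnorm (a - b) / (2 * (l1 - mu2)) = k / 2 * sqnorm (a - b) by rewrite /k; field.
have : (l1 - mu2) * k ^+ 2 * sqnorm (a - b) = k * sqnorm (a - b) by rewrite /k; field.
lra.
Qed.

End DCAStep.

Lemma pairwise_ge0_of_einv (R : realType) (mu1 mu2 l : R) :
  0 <= mu1 -> mu1 <= l -> (0 < mu1 + mu2 \/ mu1 = 0 /\ mu2 = 0) ->
  (0 <= mu2%:E * (einv mu1%:E + einv mu2%:E + einv l%:E))%E ->
  0 <= l * mu2 + l * mu1 + mu2 * mu1.
Proof.
move=> mu1_ge0 mu1_le_l mu_cond.
have [mu2_ge0 _|mu2_lt0] := leP 0 mu2.
  by rewrite !addr_ge0 ?mulr_ge0 //; lra.
have mu1_gt0 : 0 < mu1 by case: mu_cond; lra.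
have l_gt0 : 0 < l by lra.
rewrite /einv (gt_eqF mu1_gt0) (lt_eqF mu2_lt0) (gt_eqF l_gt0) -!EFinD -EFinM lee_fin.
have -> : l * mu2 + l * mu1 + mu2 * mu1 = mu1 * l * (mu2 * (mu1^-1 + mu2^-1 + l^-1)).
  by field; rewrite (gt_eqF mu1_gt0) (lt_eqF mu2_lt0) (gt_eqF l_gt0).
by move=> cond; rewrite mulr_ge0 // mulr_ge0 // ltW.
Qed.

Lemma pairwise_le0_of_einv (R : realType) (mu1 mu2 l : R) :
  0 < mu1 + mu2 -> mu2 < 0 ->
  (0 < einv mu1%:E + einv mu2%:E + einv l%:E)%E ->
  l * mu2 + l * mu1 + mu2 * mu1 <= 0.
Proof.
move=> sum_gt0 mu2_lt0.
have -> : l * mu2 + l * mu1 + mu2 * mu1 = (mu1 + mu2) * (l + mu2) - mu2 ^+ 2 by ring.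
have [l_le|l_gt] := leP (l + mu2) 0.
  by have := sqr_ge0 mu2; have := mulr_ge0_le0 (ltW sum_gt0) l_le; lra.
have mu1_gt0 : 0 < mu1 by lra.
have l_gt0 : 0 < l by lra.
rewrite /einv (gt_eqF mu1_gt0) (lt_eqF mu2_lt0) (gt_eqF l_gt0) -!EFinD lte_fin => cond.
have -> : (mu1 + mu2) * (l + mu2) - mu2 ^+ 2 = mu1 * mu2 * l * (mu1^-1 + mu2^-1 + l^-1).
  by field; rewrite (gt_eqF mu1_gt0) (lt_eqF mu2_lt0) (gt_eqF l_gt0).
by rewrite pmulr_lle0 // -mulrA pmulr_rle0 // pmulr_lle0 // ltW.
Qed.

Lemma ler_telescope (R : realDomainType) (a : nat -> R) (c : R) n :
  (forall k, (k < n)%N -> c <= a k - a k.+1) -> n%:R * c <= a 0%N - a n.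
Proof.
elim: n => [_|n IH step]; first by rewrite mul0r subrr.
have := IH (fun k kn => step k (ltnW kn)); have := step n (ltnSn n).
rewrite -natr1 mulrDl mul1r; lra.
Qed.

Section DCA.
Variables (R : realType) (d : nat) (mu1 mu2 : R) (L1 L2 : \bar R).
Variables (f1 f2 : 'rV[R]_d -> R) (N : nat) (x g1 g2 : nat -> 'rV[R]_d).
Hypotheses (f1F : FmuL mu1 L1 f1) (f2F : FmuL mu2 L2 f2).
Hypothesis dca_iter : forall k, (k < N)%N ->
  subdiff mu2 f2 (x k) (g2 k) /\
  is_argmin (fun w => f1 w - dotv (g2 k) w) (x k.+1) /\ g1 k.+1 = g2 k.
Hypothesis g1_0 : subdiff mu1 f1 (x 0%N) (g1 0%N).
Hypothesis g2_N : subdiff mu2 f2 (x N) (g2 N).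

Local Notation F y := (f1 y - f2 y).
Local Notation res k := (sqnorm (g1 k - g2 k) / 2).
Local Notation minres := (\big[Num.min/res 0%N]_(k < N.+1) res k).

Lemma dca_subdiff1 k : (k <= N)%N -> subdiff mu1 f1 (x k) (g1 k).
Proof. by case: k => [//|k] /dca_iter [_ [x_min ->]]; exact: is_argmin_subdiff f1F x_min. Qed.

Lemma dca_subdiff2 k : (k <= N)%N -> subdiff mu2 f2 (x k) (g2 k).
Proof. by rewrite leq_eqVlt => /predU1P [-> //| /dca_iter []]. Qed.

Lemma minres_le k : (k <= N)%N -> minres <= res k.
Proof. by move=> kN; exact: (bigmin_le _ (Ordinal (kN : (k < N.+1)%N))). Qed.

Definition sufficient_decrease (s : R) : Prop :=
  0 < s /\ forall k, (k < N)%N -> s * minres <= F (x k) - F (x k.+1).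

Lemma sufficient_decrease_smooth_f1 l1 s lam : L1 = l1%:E -> 0 < s ->
  rate_certificate s mu1 mu2 (l1 - mu1) lam -> sufficient_decrease s.
Proof.
move=> L1l1 s_gt0 cert; split=> // k kN.
have f1F' : FmuL mu1 l1%:E f1 by rewrite -L1l1.
have g2_sub1 : subdiff mu1 f1 (x k.+1) (g2 k).
  by rewrite -(dca_iter kN).2.2; exact: dca_subdiff1.
have [descent cocoercive] := dca_step_ineqs_smooth_f1 f1F'
  (dca_subdiff1 (ltnW kN)) g2_sub1 (dca_subdiff2 (ltnW kN)).
have := residual_le_of_descent cert descent cocoercive; rewrite subrK.
have := ler_wpM2l (ltW s_gt0) (minres_le (ltnW kN)); lra.
Qed.

Lemma sufficient_decrease_smooth_f2 l2 s lam : L2 = l2%:E -> 0 < s ->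
  rate_certificate s mu2 mu1 (l2 - mu2) lam -> sufficient_decrease s.
Proof.
move=> L2l2 s_gt0 cert; split=> // k kN.
have f2F' : FmuL mu2 l2%:E f2 by rewrite -L2l2.
have [g2_sub2 [_ g1_eq]] := dca_iter kN.
have g2_sub1 : subdiff mu1 f1 (x k.+1) (g2 k) by rewrite -g1_eq; exact: dca_subdiff1.
have [descent cocoercive] := dca_step_ineqs_smooth_f2 f2F' g2_sub1 g2_sub2 (dca_subdiff2 kN).
rewrite (addrC mu1) in descent.
have := residual_le_of_descent cert descent cocoercive; rewrite subrK -g1_eq.
have := ler_wpM2l (ltW s_gt0) (minres_le kN); lra.
Qed.

Lemma sufficient_decrease_a l2 : 0 <= mu1 -> (0 < mu1 + mu2 \/ mu1 = 0 /\ mu2 = 0) ->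
  L2 = l2%:E -> mu1 <= l2 ->
  (0 <= mu2%:E * (einv mu1%:E + einv mu2%:E + einv L2))%E ->
  sufficient_decrease ((l2 + mu1) / l2 ^+ 2).
Proof.
move=> mu1_ge0 mu_cond L2l2 mu1_le_l2; rewrite L2l2 => cond.
have mu2_lt_l2 : mu2 < l2 by case: f2F => _ [+ _]; rewrite L2l2 lte_fin.
have l2_gt0 : 0 < l2 by case: mu_cond; lra.
apply: sufficient_decrease_smooth_f2 L2l2 _ _; first by rewrite divr_gt0 ?exprn_gt0 //; lra.
apply: certificate_convex_partner => //.
exact: pairwise_ge0_of_einv cond.
Qed.

Lemma sufficient_decrease_b l1 : 0 <= mu1 -> 0 <= mu2 -> L1 = l1%:E ->
  sufficient_decrease ((l1 + mu2) / l1 ^+ 2).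
Proof.
move=> mu1_ge0 mu2_ge0 L1l1.
have mu1_lt_l1 : mu1 < l1 by case: f1F => _ [+ _]; rewrite L1l1 lte_fin.
have l1_gt0 : 0 < l1 by lra.
apply: sufficient_decrease_smooth_f1 L1l1 _ _; first by rewrite divr_gt0 ?exprn_gt0 //; lra.
by apply: certificate_convex_partner; rewrite // !addr_ge0 ?mulr_ge0 // ltW.
Qed.

Lemma sufficient_decrease_c l1 : L1 = l1%:E -> - mu2 < mu1 -> 0 < - mu2 ->
  sufficient_decrease (l1^-1 * (mu1^-1 + mu2^-1) / (mu1^-1 + mu2^-1 - l1^-1)).
Proof.
move=> L1l1 mu_sum mu2_lt0.
have mu1_lt_l1 : mu1 < l1 by case: f1F => _ [+ _]; rewrite L1l1 lte_fin.
have mu1_neq0 : mu1 != 0 by rewrite gt_eqF //; lra.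
have mu2_neq0 : mu2 != 0 by rewrite lt_eqF //; lra.
have l1_neq0 : l1 != 0 by rewrite gt_eqF //; lra.
have K_gt0 : 0 < (mu1 + mu2) * l1 - mu1 * mu2 by nra.
have -> : l1^-1 * (mu1^-1 + mu2^-1) / (mu1^-1 + mu2^-1 - l1^-1) =
    (mu1 + mu2) / ((mu1 + mu2) * l1 - mu1 * mu2).
  by field; rewrite mu1_neq0 mu2_neq0 l1_neq0 gt_eqF.
apply: sufficient_decrease_smooth_f1 L1l1 _ _; first by rewrite divr_gt0 //; lra.
by apply: certificate_weakly_convex_partner; lra.
Qed.

Lemma sufficient_decrease_d : L2 != +oo%E -> - mu2 < mu1 -> 0 < - mu2 ->
  (0 < einv mu1%:E + einv mu2%:E + einv L2)%E ->
  sufficient_decrease ((mu1 + mu2) / mu2 ^+ 2).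
Proof.
case L2l2 : L2 f2F => [l2||] [_ [mu2_lt_l2 _]] // _ mu_sum mu2_lt0 cond.
rewrite lte_fin in mu2_lt_l2.
have mu2_neq0 : mu2 != 0 by rewrite lt_eqF //; lra.
apply: sufficient_decrease_smooth_f2 L2l2 _ _.
  by rewrite divr_gt0 ?exprn_even_gt0 ?mu2_neq0 ?orbT //; lra.
rewrite (addrC mu1); apply: certificate_weakly_convex_smooth => //; try lra.
by apply: pairwise_le0_of_einv cond; lra.
Qed.

Lemma sufficient_decrease_telescope s : sufficient_decrease s ->
  N%:R * (s * minres) <= F (x 0%N) - F (x N).
Proof. by case=> _; exact: (ler_telescope (a := fun k => F (x k))). Qed.

Lemma inf_le_last_residual : (exists m, forall y, m <= F y) -> (mu2%:E < L1)%E ->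
  inf (range (fun y => F y)) <= F (x N) - rinv (L1 - mu2%:E)%E * res N.
Proof.
move=> [m F_ge_m] mu2_lt_L1.
have inf_le y : inf (range (fun y => F y)) <= F y.
  by apply: ge_inf; [exists m => _ [z _ <-] | exists y].
case L1l1 : L1 f1F mu2_lt_L1 => [l1||] // f1F' mu2_lt_l1 /=.
  rewrite lte_fin in mu2_lt_l1.
  have -> : (l1 - mu2)^-1 * res N = sqnorm (g1 N - g2 N) / (2 * (l1 - mu2)).
    by rewrite invfM; ring.
  apply: le_trans (inf_le _) _.
  exact: gradient_step_descent f1F' (dca_subdiff1 (leqnn N)) g2_N mu2_lt_l1.
by rewrite mul0r subr0.
Qed.

Lemma min_residual_le_decrease s : sufficient_decrease s -> (0 < N)%N ->
  minres <= (F (x 0%N) - F (x N)) / (s * N%:R).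
Proof.
move=> rate N_gt0; have [s_gt0 _] := rate.
rewrite ler_pdivlMr ?mulr_gt0 ?ltr0n //.
by rewrite mulrC (mulrC s) -mulrA; exact: sufficient_decrease_telescope.
Qed.

Lemma min_residual_le_gap s : sufficient_decrease s -> (0 < N)%N ->
  (exists m, forall y, m <= F y) -> (mu2%:E < L1)%E ->
  minres <= (F (x 0%N) - inf (range (fun y => F y))) / (s * N%:R + rinv (L1 - mu2%:E)%E).
Proof.
move=> rate N_gt0 F_lb mu2_lt_L1; have [s_gt0 _] := rate.
have r_ge0 : 0 <= rinv (L1 - mu2%:E)%E.
  case: L1 mu2_lt_L1 => [l1||] //=; rewrite lte_fin => mu2_lt_l1.
  by rewrite invr_ge0 subr_ge0 ltW.
have := sufficient_decrease_telescope rate.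
have := inf_le_last_residual F_lb mu2_lt_L1.
have := ler_wpM2l r_ge0 (minres_le (leqnn N)).
rewrite ler_pdivlMr; last by rewrite ltr_wpDr // mulr_gt0 ?ltr0n.
lra.
Qed.

End DCA.

Unset Implicit Arguments.

Theorem corollary2 (R : realType) (d : nat)
  (mu1 mu2 : R) (L1 L2 : \bar R) (f1 f2 : 'rV[R]_d -> R)
  (N : nat) (x g1 g2 : nat -> 'rV[R]_d) (sigma sigmap : R) :
  FmuL mu1 L1 f1 -> FmuL mu2 L2 f2 ->
  0 <= mu1 ->
  (exists m : R, forall y, m <= f1 y - f2 y) ->
  dom_subdiff mu1 f1 !=set0 ->
  dom_subdiff mu1 f1 `<=` dom_subdiff mu2 f2 ->
  range_subdiff mu2 f2 `<=` range_subdiff mu1 f1 ->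
  ((L1 = +oo%E /\ L2 != +oo%E) \/ (L1 != +oo%E /\ L2 = +oo%E)) ->
  (0 < mu1 + mu2 \/ (mu1 = 0 /\ mu2 = 0)) ->
  (1 <= N)%N ->
  (* DCA iterations *)
  (forall k, (k < N)%N ->
     subdiff mu2 f2 (x k) (g2 k) /\
     is_argmin (fun w => f1 w - dotv (g2 k) w) (x k.+1) /\
     g1 k.+1 = g2 k) ->
  subdiff mu1 f1 (x 0%N) (g1 0%N) ->
  subdiff mu2 f2 (x N) (g2 N) ->
  (* parameter domains and values of sigma, sigma^+ *)
  ((* (a) *)
   (exists l2 : R, L1 = +oo%E /\ L2 = l2%:E /\ mu1 <= l2 /\
      (0 <= mu2%:E * (einv mu1%:E + einv mu2%:E + einv L2))%E /\
      sigma = 0 /\ sigmap = (l2 + mu1) / l2 ^+ 2) \/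
   (* (b) *)
   (exists l1 : R, L2 = +oo%E /\ L1 = l1%:E /\ mu2 <= l1 /\ 0 <= mu2 /\
      (0 <= mu1%:E * (einv mu1%:E + einv mu2%:E + einv L1))%E /\
      sigma = (l1 + mu2) / l1 ^+ 2 /\ sigmap = 0) \/
   (* (c) *)
   (exists l1 : R, L2 = +oo%E /\ L1 = l1%:E /\ - mu2 < mu1 /\ 0 < - mu2 /\
      sigma = l1^-1 * (mu1^-1 + mu2^-1) / (mu1^-1 + mu2^-1 - l1^-1) /\
      sigmap = 0) \/
   (* (d) *)
   (L1 = +oo%E /\ - mu2 < mu1 /\ 0 < - mu2 /\
      (0 < einv mu1%:E + einv mu2%:E + einv L2)%E /\
      sigma = 0 /\ sigmap = (mu1 + mu2) / mu2 ^+ 2)) ->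
  let F := fun y => f1 y - f2 y in
  let p := sigma + sigmap in
  let minres := \big[Num.min/ sqnorm (g1 0%N - g2 0%N) / 2]_(k < N.+1)
                   (sqnorm (g1 k - g2 k) / 2) in
  minres <= (F (x 0%N) - F (x N)) / (p * N%:R) /\
  ((mu2%:E < L1)%E ->
     minres <= (F (x 0%N) - inf (range F)) / (p * N%:R + rinv (L1 - mu2%:E)%E)).
Proof.
(* The inclusions of domains and ranges of the subdifferentials only make the iteration
   well defined; here the iterates are given. *)
move=> f1F f2F mu1_ge0 F_lb _ _ _ one_smooth mu_cond N_gt0 dca g1_0 g2_N cases F p minres.
have rate : sufficient_decrease f1 f2 N x g1 g2 p.
  rewrite /p; case: cases => [[l2 [_ [L2l2 [? [? [-> ->]]]]]] | [
    [l1 [_ [L1l1 [_ [? [_ [-> ->]]]]]]] | [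
    [l1 [_ [L1l1 [? [? [-> ->]]]]]] | [L1oo [? [? [? [-> ->]]]]]]]].
  - by rewrite add0r; exact: (sufficient_decrease_a f1F f2F dca).
  - by rewrite addr0; exact: (sufficient_decrease_b f1F dca).
  - by rewrite addr0; exact: (sufficient_decrease_c f1F dca).
  - have L2_fin : L2 != +oo%E by case: one_smooth => [[]|[]]; rewrite L1oo.
    by rewrite add0r; exact: (sufficient_decrease_d f1F f2F dca).
split; first exact: min_residual_le_decrease rate N_gt0.
exact (min_residual_le_gap f1F dca g1_0 g2_N rate N_gt0 F_lb).
Qed.
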